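(* For any integers $k_1<k_2$, the function $\cos:(k_1\pi+\pi/2,\,k_2\pi+\pi/2)\to\mathbb{R}$ is amenable.
   Context: Relative distance on $\mathbb{R}$: $\mathrm{dist}(x,y)=0$ if $x=y=0$, $\mathrm{dist}(x,y)=|\log(y/x)|$ if $xy>0$, and $\mathrm{dist}(x,y)=\infty$ otherwise. For a real analytic function $f$ on an open set $\Omega\subseteq\mathbb{R}$, not identically zero, the condition number is $\kappa(f,x)=0$ if $x=0$, $\kappa(f,x)=\infty$ if $x\neq0$ and $f(x)=0$, and $\kappa(f,x)=|x|\,|f'(x)|/|f(x)|$ otherwise; $\mu(f,x)=1+\kappa(f,x)$. $f:\Omega\to\mathbb{R}$ is amenable if there is $C>0$ such that for every $x\in\Omega$ with $\kappa(f,x)<\infty$, the set $B_x=\{y\in\mathbb{R}:\mathrm{dist}(y,x)<1/(C\mu(f,x))\}$ is contained in $\Omega$ and $\mu(f,y)\leq C\mu(f,x)$ for all $y\in B_x$. *)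

From Stdlib Require Import Reals.
From Coquelicot Require Import Coquelicot.
Open Scope R_scope.

Definition rel_dist (x y : R) : Rbar :=
  if Req_EM_T x 0 then
    (if Req_EM_T y 0 then Finite 0 else p_infty)
  else if Rlt_dec 0 (x * y) then Finite (Rabs (ln (y / x)))
  else p_infty.

Definition kappa (f : R -> R) (x : R) : Rbar :=
  if Req_EM_T x 0 then Finite 0
  else if Req_EM_T (f x) 0 then p_infty
  else Finite (Rabs x * Rabs (Derive f x) / Rabs (f x)).

Definition mu (f : R -> R) (x : R) : Rbar := Rbar_plus (Finite 1) (kappa f x).

Definition amenable (f : R -> R) (Omega : R -> Prop) : Prop :=
  exists C : R, 0 < C /\
    forall x : R, Omega x ->
      forall kx : R, kappa f x = Finite kx ->
        forall y : R, Rbar_lt (rel_dist y x) (Finite (1 / (C * (1 + kx)))) ->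
          Omega y /\ Rbar_le (mu f y) (Finite (C * (1 + kx))).

From Stdlib Require Import Reals Lra.
From Coquelicot Require Import Coquelicot.
Open Scope R_scope.

(* Everything follows from [cos] being 1-Lipschitz.  Away from x = 0 we have
   kappa(x) = |x| |sin x| / |cos x|, and on an interval where |x| <= M,
   |x| <= 2 (1 + M) mu(x) |cos x|: if |cos x| >= 1/2 this is the bound on |x|,
   otherwise |sin x| >= 1/2 and kappa(x) >= |x| / (2 |cos x|).  So the ball of
   relative radius 1 / (9 (1 + M) mu(x)) around x moves x by at most |cos x| / 2.
   Such a move at most halves |cos|, cannot cross the zeros of [cos] bounding the
   interval, and at most doubles |y|, so kappa(y) <= 4 |x| / |cos x|. *)

Lemma exp_le_1_add_2x r : 0 <= r <= 1 / 2 -> exp r <= 1 + 2 * r.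
Proof.
intros Hr.
assert (Hinv : exp r * exp (- r) = 1) by (rewrite <- exp_plus, Rplus_opp_r; apply exp_0).
assert (Hlow : 1 - r <= exp (- r)) by (pose proof (exp_ineq1_le (- r)); lra).
assert (exp r * (1 - r) <= 1) by (rewrite <- Hinv; apply Rmult_le_compat_l; [left; apply exp_pos|lra]).
nra.
Qed.

Lemma rel_dist_lt_Rabs_sub_le x y r : 0 < r <= 1 / 2 ->
  Rbar_lt (rel_dist y x) (Finite r) -> Rabs (y - x) <= 2 * r * Rabs x.
Proof.
intros Hr; unfold rel_dist.
destruct (Req_EM_T y 0) as [->|Hy].
{ destruct (Req_EM_T x 0) as [->|]; [|easy].
  intros _; rewrite Rminus_0_r, Rabs_R0; lra. }
destruct (Rlt_dec 0 (y * x)) as [Hyx|]; [|easy]; simpl; intros Hd.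
assert (Hx : x <> 0) by (intros ->; rewrite Rmult_0_r in Hyx; lra).
set (p := y / x).
assert (Hp : 0 < p).
{ unfold p; replace (y / x) with (y * x / (x * x)) by (field; auto).
  apply Rdiv_lt_0_compat; [lra|]. destruct (Rtotal_order x 0) as [|[|]]; nra. }
replace (x / y) with (/ p) in Hd by (unfold p; field; auto).
rewrite ln_Rinv, Rabs_Ropp in Hd by exact Hp.
apply Rabs_lt_between in Hd.
assert (exp (- r) < p) by (rewrite <- (exp_ln p Hp); apply exp_increasing; lra).
assert (p < exp r) by (rewrite <- (exp_ln p Hp); apply exp_increasing; lra).
pose proof (exp_ineq1_le (- r)); pose proof (exp_le_1_add_2x r ltac:(lra)).
replace (y - x) with ((p - 1) * x) by (unfold p; field; auto).
rewrite Rabs_mult; apply Rmult_le_compat_r; [apply Rabs_pos|].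
apply Rabs_le; lra.
Qed.

Lemma rel_dist_lt_Rabs_le x y r : 0 < r <= 1 / 2 ->
  Rbar_lt (rel_dist y x) (Finite r) -> Rabs y <= 2 * Rabs x.
Proof.
intros Hr Hd.
pose proof (rel_dist_lt_Rabs_sub_le x y r Hr Hd) as Hyx.
pose proof (Rabs_triang (y - x) x) as Htri; replace (y - x + x) with y in Htri by ring.
assert (r * Rabs x <= 1 / 2 * Rabs x) by (apply Rmult_le_compat_r; [apply Rabs_pos|lra]).
lra.
Qed.

Lemma Rabs_cos_sub_le x y : Rabs (cos y - cos x) <= Rabs (y - x).
Proof.
destruct (MVT_abs cos (fun c => - sin c) x y) as (c & Hc & _).
- intros c _; apply derivable_pt_lim_cos.
- rewrite Hc, Rabs_Ropp.
  rewrite <- (Rmult_1_l (Rabs (y - x))) at 2.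
  apply Rmult_le_compat_r; [apply Rabs_pos|].
  apply Rabs_le, SIN_bound.
Qed.

Lemma Rabs_cos_half_le x y : Rabs (y - x) <= Rabs (cos x) / 2 ->
  Rabs (cos x) / 2 <= Rabs (cos y).
Proof.
intros Hyx.
pose proof (Rabs_cos_sub_le x y) as Hlip.
pose proof (Rabs_triang_inv (cos x) (cos y)) as Htri.
rewrite Rabs_minus_sym in Htri; lra.
Qed.

Lemma cos_IZR_mul_PI_add_PI2 k : cos (IZR k * PI + PI / 2) = 0.
Proof.
assert (Hs : sin (IZR k * PI) = 0) by (apply sin_eq_0_1; exists k; reflexivity).
rewrite cos_plus, Hs, cos_PI2; ring.
Qed.

Lemma cos_zeros_interval_stable a b x y : cos a = 0 -> cos b = 0 ->
  a < x < b -> Rabs (y - x) < Rabs (cos x) -> a < y < b.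
Proof.
intros Ha Hb Hx Hyx.
pose proof (Rabs_cos_sub_le a x) as La; pose proof (Rabs_cos_sub_le b x) as Lb.
rewrite Ha, Rminus_0_r in La; rewrite Hb, Rminus_0_r in Lb.
rewrite (Rabs_right (x - a)) in La by lra; rewrite (Rabs_left1 (x - b)) in Lb by lra.
apply Rabs_lt_between' in Hyx; lra.
Qed.

Lemma Derive_cos x : Derive cos x = - sin x.
Proof. apply is_derive_unique; auto_derive; auto; ring. Qed.

Lemma kappa_cos x : x <> 0 -> cos x <> 0 ->
  kappa cos x = Finite (Rabs x * Rabs (sin x) / Rabs (cos x)).
Proof.
intros Hx Hc; unfold kappa.
destruct (Req_EM_T x 0); [contradiction|].
destruct (Req_EM_T (cos x) 0); [contradiction|].
now rewrite Derive_cos, Rabs_Ropp.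
Qed.

(* At x = 0 the convention kappa = 0 agrees with the formula. *)
Lemma kappa_cos_finite x kx : kappa cos x = Finite kx ->
  cos x <> 0 /\ kx = Rabs x * Rabs (sin x) / Rabs (cos x).
Proof.
destruct (Req_EM_T x 0) as [->|Hx].
- unfold kappa; destruct (Req_EM_T 0 0); [|contradiction].
  intros [= <-]; rewrite cos_0, Rabs_R0; split; [lra|unfold Rdiv; ring].
- destruct (Req_EM_T (cos x) 0) as [Hc|Hc].
  + unfold kappa; destruct (Req_EM_T x 0); [contradiction|].
    now destruct (Req_EM_T (cos x) 0).
  + rewrite kappa_cos by assumption; intros [= <-]; auto.
Qed.

Lemma kappa_cos_ge0 x kx : kappa cos x = Finite kx -> 0 <= kx.
Proof.
intros Hk; destruct (kappa_cos_finite x kx Hk) as [Hc ->].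
apply Rdiv_le_0_compat; [apply Rmult_le_pos; apply Rabs_pos|now apply Rabs_pos_lt].
Qed.

Lemma Rabs_le_kappa_cos M x kx : Rabs x <= M -> kappa cos x = Finite kx ->
  Rabs x <= 2 * (1 + M) * (1 + kx) * Rabs (cos x).
Proof.
intros HxM Hk.
pose proof (kappa_cos_ge0 x kx Hk) as Hk0.
destruct (kappa_cos_finite x kx Hk) as [Hc Hkx].
set (c := Rabs (cos x)) in Hkx |- *; set (s := Rabs (sin x)) in Hkx.
assert (Hc0 : 0 < c) by now apply Rabs_pos_lt.
assert (Hs0 : 0 <= s) by apply Rabs_pos.
assert (Hx0 : 0 <= Rabs x) by apply Rabs_pos.
assert (Hkc : kx * c = Rabs x * s) by (rewrite Hkx; field; lra).
assert (Hcs : c * c + s * s = 1).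
{ unfold c, s; rewrite <- !Rabs_mult, !Rabs_right by (apply Rle_ge, Rle_0_sqr).
  rewrite Rplus_comm; apply sin2_cos2. }
destruct (Rle_or_lt (1 / 2) c) as [Hbig|Hsmall].
- assert (0 <= (1 + M) * (2 * c - 1)) by (apply Rmult_le_pos; lra).
  assert (0 <= (1 + M) * kx * c) by (apply Rmult_le_pos; [apply Rmult_le_pos|]; lra).
  nra.
- assert (Hs2 : 1 / 2 <= s) by nra.
  assert (Rabs x * (1 / 2) <= Rabs x * s) by (apply Rmult_le_compat_l; lra).
  assert (0 <= M * (1 + kx) * c) by (apply Rmult_le_pos; [apply Rmult_le_pos|]; lra).
  nra.
Qed.

Lemma mu_cos_le y : cos y <> 0 ->
  Rbar_le (mu cos y) (Finite (1 + Rabs y / Rabs (cos y))).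
Proof.
intros Hc.
assert (Hpos : 0 < Rabs (cos y)) by now apply Rabs_pos_lt.
destruct (Req_EM_T y 0) as [->|Hy].
- unfold mu, kappa; destruct (Req_EM_T 0 0); [|contradiction].
  simpl; rewrite Rabs_R0; unfold Rdiv; lra.
- unfold mu; rewrite kappa_cos by assumption; simpl.
  apply Rplus_le_compat_l, Rmult_le_compat_r; [left; now apply Rinv_0_lt_compat|].
  rewrite <- (Rmult_1_r (Rabs y)) at 2.
  apply Rmult_le_compat_l; [apply Rabs_pos|].
  apply Rabs_le, SIN_bound.
Qed.

Lemma mu_cos_near_le x y : cos x <> 0 ->
  Rabs (y - x) <= Rabs (cos x) / 2 -> Rabs y <= 2 * Rabs x ->
  Rbar_le (mu cos y) (Finite (1 + 4 * Rabs x / Rabs (cos x))).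
Proof.
intros Hc Hyx Hy2.
assert (Hc0 : 0 < Rabs (cos x)) by now apply Rabs_pos_lt.
assert (Hcy : Rabs (cos x) / 2 <= Rabs (cos y)) by now apply Rabs_cos_half_le.
assert (Hcy0 : cos y <> 0) by (intros E; rewrite E, Rabs_R0 in Hcy; lra).
apply Rbar_le_trans with (1 := mu_cos_le y Hcy0); simpl.
apply Rplus_le_compat_l, Rle_trans with (2 * Rabs x / (Rabs (cos x) / 2)).
- apply Rmult_le_compat; [apply Rabs_pos|left; apply Rinv_0_lt_compat; lra|exact Hy2|].
  apply Rinv_le_contravar; lra.
- right; field; lra.
Qed.

Section RelativeBall.

Variables (M x kx y : R).
Hypotheses (HM : 0 <= M) (HxM : Rabs x <= M) (Hkx : kappa cos x = Finite kx).
Hypothesis Hy : Rbar_lt (rel_dist y x) (Finite (1 / (9 * (1 + M) * (1 + kx)))).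

Let Hkx0 : 0 <= kx := kappa_cos_ge0 x kx Hkx.

Let radius_le_half : 0 < 1 / (9 * (1 + M) * (1 + kx)) <= 1 / 2.
Proof.
assert (0 <= M * kx) by now apply Rmult_le_pos.
assert (9 <= 9 * (1 + M) * (1 + kx)) by nra.
split; [apply Rdiv_lt_0_compat; lra|apply Rmult_le_compat_l, Rinv_le_contravar; lra].
Qed.

Lemma rel_ball_Rabs_sub_le_cos : Rabs (y - x) <= Rabs (cos x) / 2.
Proof.
pose proof (Rabs_le_kappa_cos M x kx HxM Hkx) as Hxc.
apply Rle_trans with (1 := rel_dist_lt_Rabs_sub_le x y _ radius_le_half Hy).
apply Rle_trans with
  (2 * (1 / (9 * (1 + M) * (1 + kx))) * (2 * (1 + M) * (1 + kx) * Rabs (cos x))).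
- apply Rmult_le_compat_l; [pose proof radius_le_half|]; lra.
- replace (2 * (1 / (9 * (1 + M) * (1 + kx))) * (2 * (1 + M) * (1 + kx) * Rabs (cos x)))
    with (4 / 9 * Rabs (cos x)) by (field; lra).
  pose proof (Rabs_pos (cos x)); lra.
Qed.

Lemma rel_ball_mu_cos_le : Rbar_le (mu cos y) (Finite (9 * (1 + M) * (1 + kx))).
Proof.
destruct (kappa_cos_finite x kx Hkx) as [Hc _].
pose proof (Rabs_le_kappa_cos M x kx HxM Hkx) as Hxc.
pose proof (rel_dist_lt_Rabs_le x y _ radius_le_half Hy) as Hy2.
apply Rbar_le_trans with (1 := mu_cos_near_le x y Hc rel_ball_Rabs_sub_le_cos Hy2).
enough (4 * Rabs x / Rabs (cos x) <= 8 * (1 + M) * (1 + kx)) by (simpl; nra).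
apply Rmult_le_reg_r with (Rabs (cos x)); [now apply Rabs_pos_lt|].
replace (4 * Rabs x / Rabs (cos x) * Rabs (cos x)) with (4 * Rabs x)
  by (field; now apply Rabs_no_R0).
lra.
Qed.

End RelativeBall.

Theorem mainTheorem10 (k1 k2 : Z) (Hk : (k1 < k2)%Z) :
  amenable cos
    (fun x : R => IZR k1 * PI + PI / 2 < x /\ x < IZR k2 * PI + PI / 2).
Proof.
set (a := IZR k1 * PI + PI / 2); set (b := IZR k2 * PI + PI / 2).
set (M := Rabs a + Rabs b).
assert (HM : 0 <= M) by (unfold M; pose proof (Rabs_pos a); pose proof (Rabs_pos b); lra).
exists (9 * (1 + M)); split; [lra|].
intros x Hx kx Hkx y Hy.
assert (HxM : Rabs x <= M) by (unfold M; unfold Rabs; repeat destruct Rcase_abs; lra).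
split.
- destruct (kappa_cos_finite x kx Hkx) as [Hc _].
  pose proof (rel_ball_Rabs_sub_le_cos M x kx y HM HxM Hkx Hy).
  pose proof (Rabs_pos_lt _ Hc).
  apply (cos_zeros_interval_stable a b x); try apply cos_IZR_mul_PI_add_PI2; [exact Hx|lra].
- exact (rel_ball_mu_cos_le M x kx y HM HxM Hkx Hy).
Qed.
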